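(* Assume $\det D_{m,0}\neq 0$ and $\det Z_1\neq 0$. Then, as $\epsilon\to 0$, \begin{align*} \det\beta_{m+2}=&\epsilon^{-r}\begin{vmatrix} -mS_D(\beta_m)_1^{-1}& mS_D(\beta_m)^{-1}_1B_{m,1}D_{m,0}^{-1}+B_{m-1,0} \\ mD_{m,0}^{-1}C_{m,0}S_D(\beta_m)_1^{-1}&(m+1)Z_{1}^{-1}-mD_{m,0}^{-1} -mD_{m,0}^{-1}C_{m,0}S_{D}(\beta_m)_{1}^{-1}B_{m,1}D_{m,0}^{-1} +D_{m-1,0} \end{vmatrix}+O(\epsilon^{-r+1}). \end{align*}
   Context: Consider the matrix discrete Painlev\'e I equation $\beta_{n+1}=n\beta_{n}^{-1}-\beta_{n-1}-\beta_{n}-\alpha$, $n=1,2,\ldots$, with $\beta_n,\alpha\in\mathbb{C}^{N\times N}$. Fix $r\in\{1,\dots,N-1\}$ and $m\geq 2$, and write every $N\times N$ matrix in blocks $\begin{pmatrix} A & B\\ C & D\end{pmatrix}$ with $A\in\mathbb{C}^{r\times r}$, $B\in\mathbb{C}^{r\times(N-r)}$, $C\in\mathbb{C}^{(N-r)\times r}$, $D\in\mathbb{C}^{(N-r)\times(N-r)}$. The initial data depend on a small parameter $\epsilon\to0$ as $\beta_{m-1}=\sum_{i\geq 0}\begin{pmatrix}A_{m-1,i}&B_{m-1,i}\\C_{m-1,i}&D_{m-1,i}\end{pmatrix}\epsilon^{i}$, $\beta_{m}=\begin{pmatrix}0&0\\C_{m,0}&D_{m,0}\end{pmatrix}+\sum_{i\geq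 1}\begin{pmatrix}A_{m,i}&B_{m,i}\\C_{m,i}&D_{m,i}\end{pmatrix}\epsilon^{i}$, with $\det\beta_m$ of exact order $\epsilon^{r}$, i.e. $\det\begin{pmatrix}A_{m,1}&B_{m,1}\\C_{m,0}&D_{m,0}\end{pmatrix}\neq 0$, and $\alpha=\begin{pmatrix}\alpha_{11}&\alpha_{12}\\\alpha_{21}&\alpha_{22}\end{pmatrix}$ independent of $\epsilon$. When $\det D_{m,0}\neq0$ set $S_D(\beta_m)_1:=A_{m,1}-B_{m,1}D_{m,0}^{-1}C_{m,0}\in\mathbb{C}^{r\times r}$ (which is then invertible) and $Z_1:=mD_{m,0}^{-1}-D_{m-1,0}-D_{m,0}-\alpha_{22}-D_{m,0}^{-1}C_{m,0}(B_{m-1,0}+\alpha_{12})$. The matrices $\beta_{m+1},\beta_{m+2}$ are obtained from $\beta_{m-1},\beta_m$ by iterating the equation. *)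

From HB Require Import structures.
From mathcomp Require Import all_boot all_order all_algebra.
From mathcomp Require Import complex.
From mathcomp Require Import reals.
Set Implicit Arguments. Unset Strict Implicit. Unset Printing Implicit Defensive.
Import Order.TTheory GRing.Theory Num.Theory.
Local Open Scope ring_scope.
Local Open Scope complex_scope.

(* Matrices are N x N with N = r + s, written in blocks (A B; C D) with
   A : r x r, D : s x s.  The scalar field is C = R[i] for a real field R. *)

Definition has_expansion (R : realType) (n : nat)
  (f : R[i] -> 'M[R[i]]_n) (c : nat -> 'M[R[i]]_n) : Prop :=
  forall K : nat, exists Cst : R, exists delta : R, 0 < delta /\
    forall eps : R[i], 0 < `|eps| -> `|eps| < delta%:C ->
      forall i j, `|(f eps - \sum_(k < K) (eps ^+ k) *: c k) i j|
                  <= Cst%:C * `|eps| ^+ K.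

Definition dPI_step (R : realType) (n : nat) (k : nat)
  (alpha bprev bcur : 'M[R[i]]_n) : 'M[R[i]]_n :=
  k%:R *: invmx bcur - bprev - bcur - alpha.

From HB Require Import structures.
From mathcomp Require Import all_boot all_order all_algebra.
From mathcomp Require Import complex reals ring.
Set Implicit Arguments. Unset Strict Implicit. Unset Printing Implicit Defensive.
Import Order.TTheory GRing.Theory Num.Theory.
Local Open Scope ring_scope.
Local Open Scope complex_scope.

(* Put E_e := diag(e I_r, I_s).  As the constant term of beta_m vanishes in its
   first r rows, G_e := E_e^-1 beta_m tends to the invertible matrix
   G_0 = [[A_{m,1}, B_{m,1}], [C_{m,0}, D_{m,0}]].  The recursion gives
   beta_{m+1} = H_e E_e^-1 and beta_{m+2} = W_e E_e^-1 with
     H_e = m G_e^-1 - (beta_{m-1} + beta_m + alpha) E_e,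
     W_e = (m+1) E_e H_e^-1 E_e - m G_e^-1 + beta_{m-1} E_e,
   hence det beta_{m+2} = e^-r det W_e.  All these are rational in quantities
   converging at rate O(e), so W_e = W_0 + O(e), where E_0 = diag(0, I_s).
   The push-through identity shows that H_0 is invertible and that the lower
   right block of H_0^-1 is Z_1^-1; together with the Schur complement formula
   for G_0^-1 this identifies W_0 with the block matrix of the statement. *)

Lemma ursubmxD (V : zmodType) m1 m2 n1 n2 (A B : 'M[V]_(m1 + m2, n1 + n2)) :
  ursubmx (A + B) = ursubmx A + ursubmx B.
Proof. by rewrite /ursubmx !raddfD. Qed.

Lemma drsubmxD (V : zmodType) m1 m2 n1 n2 (A B : 'M[V]_(m1 + m2, n1 + n2)) :
  drsubmx (A + B) = drsubmx A + drsubmx B.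
Proof. by rewrite /drsubmx !raddfD. Qed.

Section BlockAlgebra.
Variable F : fieldType.

Lemma mulmx1_invmx n (A B : 'M[F]_n) : A *m B = 1%:M -> invmx A = B.
Proof.
move=> AB; have [uA _] := mulmx1_unit AB.
by rewrite -[invmx A]mulmx1 -AB mulmxA mulVmx // mul1mx.
Qed.

Lemma invmx_block_schur r s (A : 'M[F]_r) (B : 'M[F]_(r, s)) (C : 'M[F]_(s, r)) (D : 'M[F]_s) :
  D \in unitmx -> block_mx A B C D \in unitmx ->
  let S := A - B *m invmx D *m C in
  S \in unitmx /\
  invmx (block_mx A B C D) =
    block_mx (invmx S) (- (invmx S *m B *m invmx D)) (- (invmx D *m C *m invmx S))
             (invmx D + invmx D *m C *m invmx S *m B *m invmx D).
Proof.
move=> uD uM S.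
have factor : block_mx A B C D = block_mx 1%:M (B *m invmx D) 0 1%:M *m block_mx S 0 C D.
  by rewrite mulmx_block !mul1mx !mulmx0 !mul0mx !add0r ?addr0 subrK -mulmxA mulVmx ?mulmx1.
have uS : S \in unitmx.
  move: uM; rewrite factor !unitmxE det_mulmx det_ublock det_lblock !det_scalar.
  by rewrite !expr1n !mul1r unitrM => /andP[].
split => //; apply: mulmx1_invmx.
rewrite mulmx_block (@scalar_mx_block _ r s 1); congr block_mx.
- by rewrite mulmxN !mulmxA -mulmxBl mulmxV.
- rewrite mulmxN mulmxDr !mulmxA.
  rewrite -[A *m invmx S *m B *m invmx D]mulmxA addrCA [- _ + _]addrC.
  rewrite -[B *m invmx D *m C *m invmx S *m B *m invmx D]mulmxA -!mulmxBl.
  by rewrite -opprB -/S mulNmx mulmxV // mulNmx mul1mx addrN.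
- by rewrite mulmxN !mulmxA mulmxV // mul1mx addrN.
- by rewrite mulmxN mulmxDr !mulmxA mulmxV // mul1mx addrCA addNr addr0.
Qed.

Lemma push_through_invmx n p (a : F) (U : 'M[F]_(n, p)) (V : 'M[F]_(p, n)) :
  a != 0 -> a%:M - V *m U \in unitmx ->
  a%:M - U *m V \in unitmx /\ V *m invmx (a%:M - U *m V) = invmx (a%:M - V *m U) *m V.
Proof.
move=> a0 uVU; set K := invmx (a%:M - V *m U).
have VU : V *m U = a%:M - (a%:M - V *m U) by rewrite subKr.
have VUK : V *m U *m K = a *: K - 1%:M.
  by rewrite VU mulmxBl mul_scalar_mx mulmxV.
have UVUKV : U *m V *m (U *m K *m V) = a *: (U *m K *m V) - U *m V.
  rewrite !mulmxA -[U *m V *m U]mulmxA -[U *m (V *m U) *m K]mulmxA VUK.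
  by rewrite mulmxBr mulmxBl mulmx1 -scalemxAr -scalemxAl.
have inv : (a%:M - U *m V) *m (a^-1 *: (1%:M + U *m K *m V)) = 1%:M.
  rewrite -scalemxAr mulmxDr mulmx1 mulmxBl UVUKV mul_scalar_mx opprB.
  by rewrite [a *: _ + _]addrCA subrr addr0 subrK scale_scalar_mx mulVf.
split; first by case: (mulmx1_unit inv).
rewrite (mulmx1_invmx inv) -scalemxAr mulmxDr mulmx1 !mulmxA VUK mulmxBl mul1mx.
by rewrite addrC subrK -scalemxAl scalerA mulVf ?scale1r.
Qed.

Lemma copid_mx_block r s : copid_mx r = block_mx 0 0 0 1%:M :> 'M[F]_(r + s).
Proof.
by rewrite /copid_mx pid_mx_block (scalar_mx_block r s) opp_block_mx add_block_mx !subr0 subrr.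
Qed.

Lemma mulmx_copid_mulmx m n r s (P : 'M[F]_(m, r + s)) (Q : 'M[F]_(r + s, n)) :
  P *m copid_mx r *m Q = rsubmx P *m dsubmx Q.
Proof.
rewrite copid_mx_block -{1}[P]hsubmxK -{1}[Q]vsubmxK mul_row_block !mulmx0 mulmx1 !addr0.
by rewrite add0r mul_row_col mul0mx add0r.
Qed.

Lemma mulmx_copid r s (P : 'M[F]_(r + s)) :
  P *m copid_mx r = block_mx 0 (ursubmx P) 0 (drsubmx P).
Proof.
by rewrite copid_mx_block -{1}[P]submxK mulmx_block !mulmx0 !mulmx1 !addr0 !add0r.
Qed.

Lemma copid_mulmx_copid r s (J : 'M[F]_(r + s)) :
  copid_mx r *m J *m copid_mx r = block_mx 0 0 0 (drsubmx J).
Proof.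
rewrite copid_mx_block -{1}[J]submxK !mulmx_block.
by rewrite !mul0mx !mulmx0 !mul1mx !mulmx1 !addr0 !add0r.
Qed.

(* With G = E^-1 beta_n and Q = beta_{n-1} + beta_n + alpha, the recursion reads
   beta_{n+1} = scaled_next a E G Q *m E^-1 (see [det_second_step]). *)
Definition scaled_next n (a : F) (E G Q : 'M[F]_n) := a *: invmx G - Q *m E.

Definition scaled_next2 n (a b : F) (E G P Q : 'M[F]_n) :=
  b *: (E *m invmx (scaled_next a E G Q) *m E) - a *: invmx G + P *m E.

Lemma drsubmx_invmx_sub_copid r s (a : F) (G Q : 'M[F]_(r + s)) (Z : 'M[F]_s) :
  a != 0 -> G \in unitmx -> drsubmx G \in unitmx -> Z \in unitmx ->
  drsubmx G *m Z = a%:M - dsubmx G *m rsubmx Q ->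
  let H := scaled_next a (copid_mx r) G Q in
  H \in unitmx /\ drsubmx (invmx H) = invmx Z.
Proof.
move=> a0 uG uD uZ DZ H.
have uVU : a%:M - dsubmx G *m rsubmx Q \in unitmx by rewrite -DZ unitmx_mul uD.
have [uUV VinvUV] := push_through_invmx a0 uVU.
have HG : H *m G = a%:M - rsubmx Q *m dsubmx G.
  by rewrite /H mulmxBl -scalemxAl mulVmx // scalemx1 mulmx_copid_mulmx.
have HGinv : H *m (G *m invmx (a%:M - rsubmx Q *m dsubmx G)) = 1%:M.
  by rewrite mulmxA HG mulmxV.
have DZinv : drsubmx G *m Z *m (invmx Z *m invmx (drsubmx G)) = 1%:M.
  by rewrite mulmxA -(mulmxA _ Z) mulmxV // mulmx1 mulmxV.
split; first by case: (mulmx1_unit HGinv).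
rewrite (mulmx1_invmx HGinv) /drsubmx -{1}[G]vsubmxK mul_col_mx col_mxKd VinvUV.
rewrite -DZ (mulmx1_invmx DZinv) -{1}[dsubmx G]hsubmxK mul_mx_row row_mxKr.
by rewrite -mulmxA mulVmx // mulmx1.
Qed.

Lemma second_step_limit r s (a b : F) (A : 'M[F]_r) (B : 'M[F]_(r, s)) (C : 'M[F]_(s, r))
    (D : 'M[F]_s) (P Q : 'M[F]_(r + s)) :
  a != 0 -> D \in unitmx -> block_mx A B C D \in unitmx ->
  let Di := invmx D in let Si := invmx (A - B *m Di *m C) in
  let Z := a *: Di - drsubmx Q - Di *m C *m ursubmx Q in
  Z \in unitmx ->
  let G := block_mx A B C D in
  scaled_next a (copid_mx r) G Q \in unitmx /\
  scaled_next2 a b (copid_mx r) G P Q =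
  block_mx (- (a *: Si)) (a *: (Si *m B *m Di) + ursubmx P) (a *: (Di *m C *m Si))
           (b *: invmx Z - a *: Di - a *: (Di *m C *m Si *m B *m Di) + drsubmx P).
Proof.
move=> a0 uD uG Di Si Z uZ G; rewrite {}/G.
have rsubQ : rsubmx Q = col_mx (ursubmx Q) (drsubmx Q).
  by rewrite -{1}[Q]submxK block_mxEh row_mxKr.
have DZ : drsubmx (block_mx A B C D) *m Z =
          a%:M - dsubmx (block_mx A B C D) *m rsubmx Q.
  rewrite block_mxKdr block_mxEv col_mxKd rsubQ mul_row_col.
  rewrite /Z !mulmxBr -scalemxAr mulmxV // scalemx1 !mulmxA mulmxV // mul1mx.
  by rewrite opprD addrA [_ - D *m _ - _]addrAC.
have uDG : drsubmx (block_mx A B C D) \in unitmx by rewrite block_mxKdr.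
have [uH drH] := drsubmx_invmx_sub_copid a0 uG uDG uZ DZ.
split=> //; rewrite /scaled_next2 copid_mulmx_copid drH mulmx_copid.
have [_ -> ] := invmx_block_schur uD uG.
rewrite !scale_block_mx opp_block_mx.
rewrite !add_block_mx !scaler0 !add0r !addr0 !scalerN !opprK.
by rewrite scalerDr opprD addrA.
Qed.

Definition top_scale_mx r s (e : F) : 'M[F]_(r + s) := block_mx e%:M 0 0 1%:M.

Lemma top_scale_mxM r s (e e' : F) :
  top_scale_mx r s e *m top_scale_mx r s e' = top_scale_mx r s (e * e').
Proof. by rewrite mulmx_block !mulmx0 !mul0mx !addr0 !add0r mulmx1 -scalar_mxM. Qed.

Lemma top_scale_mx1 r s : top_scale_mx r s 1 = 1%:M.
Proof. by rewrite /top_scale_mx -scalar_mx_block. Qed.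

Lemma det_top_scale_mx r s (e : F) : \det (top_scale_mx r s e) = e ^+ r.
Proof. by rewrite det_ublock det_scalar det1 mulr1. Qed.

Lemma det_second_step r s (a b e : F) (alpha P B : 'M[F]_(r + s)) :
  e != 0 ->
  let E := top_scale_mx r s e in
  let G := top_scale_mx r s e^-1 *m B in
  G \in unitmx -> scaled_next a E G (P + B + alpha) \in unitmx ->
  let N := a *: invmx B - P - B - alpha in
  \det (b *: invmx N - B - N - alpha) =
  e ^- r * \det (scaled_next2 a b E G P (P + B + alpha)).
Proof.
move=> e0 E G uG uH N; set H := scaled_next _ _ _ _ in uH *.
set Ei := top_scale_mx r s e^-1.
have EEi : E *m Ei = 1%:M by rewrite top_scale_mxM mulfV ?top_scale_mx1.
have EiE : Ei *m E = 1%:M by rewrite top_scale_mxM mulVf ?top_scale_mx1.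
have BE : B = E *m G by rewrite mulmxA EEi mul1mx.
have invB : invmx B = invmx G *m Ei.
  by apply: mulmx1_invmx; rewrite BE -mulmxA (mulmxA G) mulmxV // mul1mx.
have NE : N = H *m Ei.
  by rewrite /N /H mulmxBl -scalemxAl -mulmxA EEi mulmx1 invB !opprD !addrA.
have invN : invmx N = E *m invmx H.
  by apply: mulmx1_invmx; rewrite NE -mulmxA (mulmxA Ei) EiE mul1mx mulmxV.
have -> : b *: invmx N - B - N - alpha =
          (b *: (E *m invmx H *m E) - a *: invmx G + P *m E) *m Ei.
  rewrite !mulmxDl mulNmx -!scalemxAl -!mulmxA EEi !mulmx1 invN /N invB.
  by rewrite !opprD !opprK !addrA addrK [_ + B]addrAC [_ - B - _]addrAC subrK.
by rewrite det_mulmx det_top_scale_mx exprVn mulrC.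
Qed.

End BlockAlgebra.

Section BigO.
Variable R : rcfType.
Local Notation C := R[i].

Lemma ge0_RRe (x : C) : 0 <= x -> x = (complex.Re x)%:C.
Proof. by case: x => a b /ger0_Im /= ->. Qed.

Definition near0 (P : C -> Prop) := exists d : R, 0 < d /\
  forall e : C, 0 < `|e| -> `|e| < d%:C -> P e.

Lemma near0_and P Q : near0 P -> near0 Q -> near0 (fun e => P e /\ Q e).
Proof.
move=> [d1 [d1p H1]] [d2 [d2p H2]]; exists (Num.min d1 d2).
split=> [|e e0 ed]; first by rewrite lt_min d1p d2p.
by split; [apply: H1 | apply: H2]; rewrite // (lt_le_trans ed) // lecR ge_min lexx ?orbT.
Qed.

Lemma near0_mono (P Q : C -> Prop) : (forall e, P e -> Q e) -> near0 P -> near0 Q.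
Proof. by move=> PQ [d [dp H]]; exists d; split => // e e0 ed; apply/PQ/H. Qed.

Lemma near0_lt (x : C) : 0 < x -> near0 (fun e => `|e| < x).
Proof.
move=> x0; have xE := ge0_RRe (ltW x0).
by exists (complex.Re x); split=> [|e _]; rewrite -?ltcR -xE.
Qed.

Lemma near0_neq0 : near0 (fun e => e != 0).
Proof. by exists 1; split => // e; rewrite normr_gt0. Qed.

Definition cvgO (f : C -> C) (l : C) := exists K : C, 0 <= K /\
  near0 (fun e => `|f e - l| <= K * `|e|).

Lemma cvgO_near f g l : near0 (fun e => f e = g e) -> cvgO f l -> cvgO g l.
Proof.
move=> fg [K [K0 H]]; exists K; split => //.
by apply: near0_mono (near0_and fg H) => e [<-].
Qed.

Lemma cvgO_ext f g l l' : f =1 g -> l = l' -> cvgO f l -> cvgO g l'.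
Proof.
move=> fg <-; apply: cvgO_near; by exists 1; split => // e *; rewrite fg.
Qed.

Lemma cvgO_cst c : cvgO (fun _ => c) c.
Proof.
by exists 0; split => //; exists 1; split => // e _ _; rewrite subrr normr0 mul0r.
Qed.

Lemma cvgO_id : cvgO id 0.
Proof. by exists 1; split => //; exists 1; split => // e _ _; rewrite subr0 mul1r. Qed.

Lemma cvgO_bounded f l : cvgO f l -> exists B : C, 0 <= B /\ near0 (fun e => `|f e| <= B).
Proof.
move=> [K [K0 H]]; exists (`|l| + K); split; first by rewrite addr_ge0.
apply: near0_mono (near0_and H (near0_lt ltr01)) => e [H1 H2].
rewrite -[f e](subrK l) addrC (le_trans (ler_normD _ _)) // lerD2l.
by rewrite (le_trans H1) // ler_piMr // ltW.
Qed.

Lemma cvgOD f g l m : cvgO f l -> cvgO g m -> cvgO (fun e => f e + g e) (l + m).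
Proof.
move=> [K1 [K10 H1]] [K2 [K20 H2]]; exists (K1 + K2); split; first by rewrite addr_ge0.
apply: near0_mono (near0_and H1 H2) => e [e1 e2].
rewrite opprD addrACA mulrDl (le_trans (ler_normD _ _)) //; exact: lerD.
Qed.

Lemma cvgON f l : cvgO f l -> cvgO (fun e => - f e) (- l).
Proof.
move=> [K [K0 H]]; exists K; split => //.
by apply: near0_mono H => e; rewrite -opprD normrN.
Qed.

Lemma cvgOM f g l m : cvgO f l -> cvgO g m -> cvgO (fun e => f e * g e) (l * m).
Proof.
move=> hf hg; have [B [B0 HB]] := cvgO_bounded hg.
move: hf hg => [K1 [K10 H1]] [K2 [K20 H2]].
exists (K1 * B + `|l| * K2); split; first by rewrite addr_ge0 // mulr_ge0.
apply: near0_mono (near0_and (near0_and H1 H2) HB) => e [[e1 e2] e3].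
have -> : f e * g e - l * m = (f e - l) * g e + l * (g e - m).
  by rewrite mulrBl mulrBr addrA subrK.
rewrite [X in _ <= X]mulrDl (le_trans (ler_normD _ _)) // !normrM; apply: lerD.
  by rewrite mulrAC ler_pM.
by rewrite -mulrA ler_wpM2l.
Qed.

Lemma cvgO_away0 f l : cvgO f l -> l != 0 -> near0 (fun e => `|l| / 2 <= `|f e|).
Proof.
move=> [K [K0 H]] l0.
have lp : 0 < `|l| by rewrite normr_gt0.
have Kp : 0 < 2 * (K + 1) by rewrite mulr_gt0 // ltr_wpDl.
apply: near0_mono (near0_and H (near0_lt (divr_gt0 lp Kp))) => e [e1 e2].
have hK : K * `|e| <= `|l| / 2.
  apply: le_trans (_ : (K + 1) * `|e| <= _); first by rewrite ler_wpM2r ?lerDl.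
  have K1 : K + 1 != 0 by rewrite lt0r_neq0 // ltr_wpDl.
  have -> : `|l| / 2 = (K + 1) * (`|l| / (2 * (K + 1))) by field.
  by rewrite ler_wpM2l ?ltW ?ltr_wpDl.
have : `|l| <= `|f e| + `|l| / 2.
  rewrite (le_trans (_ : _ <= `|f e| + `|f e - l|)) ?lerD2l ?(le_trans e1 hK) //.
  by rewrite -{1}[l](subrK (f e)) addrC [`|f e - l|]distrC ler_normD.
by rewrite -lerBlDr {1}[`|l|](splitr `|l|) addrK.
Qed.

Lemma cvgOV f l : cvgO f l -> l != 0 -> cvgO (fun e => (f e)^-1) l^-1.
Proof.
move=> hf l0; have hb := cvgO_away0 hf l0; move: hf => [K [K0 H]].
have lp : 0 < `|l| by rewrite normr_gt0.
have lp2 : 0 < `|l| / 2 * `|l| by rewrite mulr_gt0 ?divr_gt0.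
exists (K / (`|l| / 2 * `|l|)); split; first by rewrite divr_ge0 // ltW.
apply: near0_mono (near0_and H hb) => e [e1 e2].
have fe0 : f e != 0 by rewrite -normr_gt0 (lt_le_trans _ e2) ?divr_gt0.
have -> : (f e)^-1 - l^-1 = (l - f e) / (f e * l) by field; rewrite fe0 l0.
rewrite normrM normfV normrM distrC [X in _ <= X]mulrAC.
rewrite ler_pM ?invr_ge0 ?mulr_ge0 // lef_pV2 ?posrE ?mulr_gt0 ?normr_gt0 ?invr_gt0 //.
by rewrite ler_wpM2r.
Qed.

Lemma cvgO_sum (I : Type) (rs : seq I) (P : pred I) (F : I -> C -> C) (L : I -> C) :
  (forall i, cvgO (F i) (L i)) ->
  cvgO (fun e => \sum_(i <- rs | P i) F i e) (\sum_(i <- rs | P i) L i).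
Proof.
move=> hF; elim: rs => [|i rs IH].
  by apply: cvgO_ext (cvgO_cst 0) => [e|]; rewrite big_nil.
apply: cvgO_ext (_ : cvgO (fun e => if P i then F i e + \sum_(j <- rs | P j) F j e
                       else \sum_(j <- rs | P j) F j e) _) => [e||]; rewrite ?big_cons //.
by case: (P i) => //; apply: cvgOD (hF i) IH.
Qed.

Lemma cvgO_prod (I : Type) (rs : seq I) (P : pred I) (F : I -> C -> C) (L : I -> C) :
  (forall i, cvgO (F i) (L i)) ->
  cvgO (fun e => \prod_(i <- rs | P i) F i e) (\prod_(i <- rs | P i) L i).
Proof.
move=> hF; elim: rs => [|i rs IH].
  by apply: cvgO_ext (cvgO_cst 1) => [e|]; rewrite big_nil.
apply: cvgO_ext (_ : cvgO (fun e => if P i then F i e * \prod_(j <- rs | P j) F j e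
                       else \prod_(j <- rs | P j) F j e) _) => [e||]; rewrite ?big_cons //.
by case: (P i) => //; apply: cvgOM (hF i) IH.
Qed.

Lemma cvgO_scaled_bound (f g : C -> C) (l : C) (n : nat) :
  cvgO f l -> near0 (fun e => g e = e ^- n * f e) ->
  exists K : R, exists d : R, 0 < d /\ forall e : C, 0 < `|e| -> `|e| < d%:C ->
    `|g e - e ^- n * l| <= K%:C * `|e| ^- n * `|e|.
Proof.
move=> [K [K0 H]] gf; have [d [d0 Hd]] := near0_and gf H.
exists (complex.Re K), d; split => // e e0 ed; have [-> fl] := Hd e e0 ed.
rewrite -(ge0_RRe K0) -mulrBr normrM normfV normrX mulrC mulrAC.
by rewrite ler_wpM2r ?invr_ge0 ?exprn_ge0.
Qed.

End BigO.

Section MatrixBigO.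
Variable R : rcfType.
Local Notation C := R[i].

Definition mxcvgO m n (f : C -> 'M[C]_(m, n)) (L : 'M[C]_(m, n)) :=
  forall i j, cvgO (fun e => f e i j) (L i j).

Lemma mxcvgO_near m n (f g : C -> 'M[C]_(m, n)) L :
  near0 (fun e => f e = g e) -> mxcvgO f L -> mxcvgO g L.
Proof. by move=> fg hf i j; apply: cvgO_near (hf i j); apply: near0_mono fg => e ->. Qed.

Lemma mxcvgO_ext m n (f g : C -> 'M[C]_(m, n)) L L' :
  f =1 g -> L = L' -> mxcvgO f L -> mxcvgO g L'.
Proof. by move=> fg <- hf i j; apply: cvgO_ext (hf i j) => // e; rewrite fg. Qed.

Lemma mxcvgO_cst m n (L : 'M[C]_(m, n)) : mxcvgO (fun _ => L) L.
Proof. by move=> i j; apply: cvgO_cst. Qed.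

Lemma mxcvgOD m n (f g : C -> 'M[C]_(m, n)) L L' :
  mxcvgO f L -> mxcvgO g L' -> mxcvgO (fun e => f e + g e) (L + L').
Proof. by move=> hf hg i j; apply: cvgO_ext (cvgOD (hf i j) (hg i j)) => [e|]; rewrite !mxE. Qed.

Lemma mxcvgON m n (f : C -> 'M[C]_(m, n)) L :
  mxcvgO f L -> mxcvgO (fun e => - f e) (- L).
Proof. by move=> hf i j; apply: cvgO_ext (cvgON (hf i j)) => [e|]; rewrite !mxE. Qed.

Lemma mxcvgOB m n (f g : C -> 'M[C]_(m, n)) L L' :
  mxcvgO f L -> mxcvgO g L' -> mxcvgO (fun e => f e - g e) (L - L').
Proof. by move=> hf hg; apply/mxcvgOD/mxcvgON. Qed.

Lemma mxcvgOZ m n (k : C -> C) kl (f : C -> 'M[C]_(m, n)) L :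
  cvgO k kl -> mxcvgO f L -> mxcvgO (fun e => k e *: f e) (kl *: L).
Proof. by move=> hk hf i j; apply: cvgO_ext (cvgOM hk (hf i j)) => [e|]; rewrite !mxE. Qed.

Lemma mxcvgOM m n p (f : C -> 'M[C]_(m, n)) (g : C -> 'M[C]_(n, p)) L L' :
  mxcvgO f L -> mxcvgO g L' -> mxcvgO (fun e => f e *m g e) (L *m L').
Proof.
move=> hf hg i j; apply: cvgO_ext (cvgO_sum _ _ (fun k => cvgOM (hf i k) (hg k j))) => [e|];
  by rewrite !mxE.
Qed.

Lemma mxcvgO_block m1 m2 n1 n2 (a : C -> 'M[C]_(m1, n1)) (b : C -> 'M[C]_(m1, n2))
    (c : C -> 'M[C]_(m2, n1)) (d : C -> 'M[C]_(m2, n2)) A B Cm D :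
  mxcvgO a A -> mxcvgO b B -> mxcvgO c Cm -> mxcvgO d D ->
  mxcvgO (fun e => block_mx (a e) (b e) (c e) (d e)) (block_mx A B Cm D).
Proof.
move=> ha hb hc hd i j.
rewrite -(splitK i) -(splitK j); case: (split i) => k; case: (split j) => l /=;
  [apply: cvgO_ext (ha k l) | apply: cvgO_ext (hb k l)
  | apply: cvgO_ext (hc k l) | apply: cvgO_ext (hd k l)];
  by move=> *; rewrite ?block_mxEul ?block_mxEur ?block_mxEdl ?block_mxEdr.
Qed.

Lemma mxcvgO_dl m1 m2 n1 n2 (f : C -> 'M[C]_(m1 + m2, n1 + n2)) L :
  mxcvgO f L -> mxcvgO (fun e => dlsubmx (f e)) (dlsubmx L).
Proof. by move=> h i j; apply: cvgO_ext (h _ _) => [e|]; rewrite !mxE. Qed.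

Lemma mxcvgO_dr m1 m2 n1 n2 (f : C -> 'M[C]_(m1 + m2, n1 + n2)) L :
  mxcvgO f L -> mxcvgO (fun e => drsubmx (f e)) (drsubmx L).
Proof. by move=> h i j; apply: cvgO_ext (h _ _) => [e|]; rewrite !mxE. Qed.

Lemma mxcvgO_scalar n : mxcvgO (fun e : C => (e%:M : 'M[C]_n)) 0.
Proof.
move=> i j; rewrite mxE.
apply: (cvgO_ext (f := fun e => e *+ (i == j))) => [e|//|]; first by rewrite mxE.
by case: (i == j); [apply: cvgO_id | apply: cvgO_ext (cvgO_cst 0)].
Qed.

Lemma cvgO_det n (f : C -> 'M[C]_n) L :
  mxcvgO f L -> cvgO (fun e => \det (f e)) (\det L).
Proof.
by move=> h; apply: cvgO_sum => s; apply/cvgOM/cvgO_prod; [apply: cvgO_cst|].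
Qed.

Lemma mxcvgO_unitmx n (f : C -> 'M[C]_n) L :
  mxcvgO f L -> L \in unitmx -> near0 (fun e => f e \in unitmx).
Proof.
move=> h; rewrite unitmxE unitfE => dL.
apply: near0_mono (cvgO_away0 (cvgO_det h) dL) => e he.
by rewrite unitmxE unitfE -normr_gt0 (lt_le_trans _ he) ?divr_gt0 ?normr_gt0.
Qed.

Lemma mxcvgO_adj n (f : C -> 'M[C]_n) L :
  mxcvgO f L -> mxcvgO (fun e => \adj (f e)) (\adj L).
Proof.
move=> h i j; apply: cvgO_ext (cvgOM (cvgO_cst ((-1) ^+ (j + i)))
   (cvgO_det (f := fun e => row' j (col' i (f e))) (L := row' j (col' i L)) _)) => [e||].
- by rewrite !mxE.
- by rewrite !mxE.
by move=> k l; apply: cvgO_ext (h _ _) => [e|]; rewrite !mxE.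
Qed.

Lemma mxcvgOV n (f : C -> 'M[C]_n) L :
  mxcvgO f L -> L \in unitmx -> mxcvgO (fun e => invmx (f e)) (invmx L).
Proof.
move=> h uL; apply: (mxcvgO_near (f := fun e => (\det (f e))^-1 *: \adj (f e))).
  by apply: near0_mono (mxcvgO_unitmx h uL) => e ue; rewrite /invmx ue.
rewrite /invmx uL; apply: mxcvgOZ (mxcvgO_adj h).
by apply: cvgOV (cvgO_det h) _; rewrite -unitfE -unitmxE.
Qed.

Lemma mxcvgO_scaled_next n (a : C) (E G Q : C -> 'M[C]_n) E0 G0 Q0 :
  mxcvgO E E0 -> mxcvgO G G0 -> mxcvgO Q Q0 -> G0 \in unitmx ->
  mxcvgO (fun e => scaled_next a (E e) (G e) (Q e)) (scaled_next a E0 G0 Q0).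
Proof.
move=> hE hG hQ uG0.
exact: mxcvgOB (mxcvgOZ (cvgO_cst a) (mxcvgOV hG uG0)) (mxcvgOM hQ hE).
Qed.

Lemma mxcvgO_scaled_next2 n (a b : C) (E G P Q : C -> 'M[C]_n) E0 G0 P0 Q0 :
  mxcvgO E E0 -> mxcvgO G G0 -> mxcvgO P P0 -> mxcvgO Q Q0 ->
  G0 \in unitmx -> scaled_next a E0 G0 Q0 \in unitmx ->
  mxcvgO (fun e => scaled_next2 a b (E e) (G e) (P e) (Q e)) (scaled_next2 a b E0 G0 P0 Q0).
Proof.
move=> hE hG hP hQ uG0 uH0; have hH := mxcvgO_scaled_next a hE hG hQ uG0.
apply: mxcvgOD (mxcvgOM hP hE).
exact: mxcvgOB (mxcvgOZ (cvgO_cst b) (mxcvgOM (mxcvgOM hE (mxcvgOV hH uH0)) hE))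
               (mxcvgOZ (cvgO_cst a) (mxcvgOV hG uG0)).
Qed.

End MatrixBigO.

Section Expansions.
Variable R : realType.
Local Notation C := R[i].

Lemma has_expansion_cvgO0 n (f : C -> 'M[C]_n) c : has_expansion f c -> mxcvgO f (c 0%N).
Proof.
move=> /(_ 1%N) [K [d [d0 H]]] i j; exists (Num.max K 0)%:C.
split; first by rewrite ler0c le_max lexx orbT.
exists d; split => // e e0 ed; have := H e e0 ed i j.
rewrite big_ord1 expr0 scale1r expr1 !mxE => /le_trans; apply.
by rewrite ler_wpM2r // lecR le_max lexx.
Qed.

Lemma has_expansion_cvgO1 n (f : C -> 'M[C]_n) c i j : has_expansion f c -> c 0%N i j = 0 ->
  cvgO (fun e => e^-1 * f e i j) (c 1%N i j).
Proof.
move=> /(_ 2%N) [K [d [d0 H]]] c0; exists (Num.max K 0)%:C.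
split; first by rewrite ler0c le_max lexx orbT.
exists d; split => // e e0 ed; have := H e e0 ed i j.
rewrite !big_ord_recr big_ord0 /= expr0 scale1r expr1 add0r !mxE c0 add0r => h.
have e_neq0 : e != 0 by rewrite -normr_gt0.
have -> : e^-1 * f e i j - c 1%N i j = e^-1 * (f e i j - e * c 1%N i j) by field.
rewrite normrM normfV ler_pdivrMl // mulrCA -expr2.
by rewrite (le_trans h) // ler_wpM2r ?exprn_ge0 // lecR le_max lexx.
Qed.

Lemma mxcvgO_top_scale_mx r s : mxcvgO (@top_scale_mx C r s) (copid_mx r).
Proof.
apply: (mxcvgO_ext (f := fun e => block_mx e%:M 0 0 1%:M) (L := block_mx 0 0 0 1%:M)) => //.
  by rewrite copid_mx_block.
exact: (mxcvgO_block (@mxcvgO_scalar _ r) (mxcvgO_cst _) (mxcvgO_cst _) (mxcvgO_cst _)).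
Qed.

Lemma mxcvgO_top_unscale r s (f : C -> 'M[C]_(r + s)) c :
  has_expansion f c -> ulsubmx (c 0%N) = 0 -> ursubmx (c 0%N) = 0 ->
  mxcvgO (fun e => top_scale_mx r s e^-1 *m f e)
    (block_mx (ulsubmx (c 1%N)) (ursubmx (c 1%N)) (dlsubmx (c 0%N)) (drsubmx (c 0%N))).
Proof.
move=> hf ul0 ur0; have h0 := has_expansion_cvgO0 hf.
have top_rescaled i j : c 0%N (lshift s i) j = 0 ->
    cvgO (fun e => e^-1 * f e (lshift s i) j) (c 1%N (lshift s i) j).
  exact: has_expansion_cvgO1.
apply: (mxcvgO_ext (f := fun e => block_mx (e^-1 *: ulsubmx (f e)) (e^-1 *: ursubmx (f e))
                                           (dlsubmx (f e)) (drsubmx (f e)))) => //.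
  move=> e; rewrite /top_scale_mx -[f e in RHS]submxK mulmx_block.
  by rewrite !mul0mx !mul1mx !addr0 !add0r !mul_scalar_mx.
apply: mxcvgO_block (mxcvgO_dl h0) (mxcvgO_dr h0) => i j.
- apply: cvgO_ext (top_rescaled i (lshift s j) _) => [e||]; rewrite ?mxE //.
  by have := congr1 (fun M : 'M_r => M i j) ul0; rewrite !mxE.
- apply: cvgO_ext (top_rescaled i (rshift r j) _) => [e||]; rewrite ?mxE //.
  by have := congr1 (fun M : 'M_(r, s) => M i j) ur0; rewrite !mxE.
Qed.

End Expansions.

Unset Implicit Arguments.

Theorem lemma3 (R : realType) (r s m : nat) (hr : (0 < r)%N) (hs : (0 < s)%N)
  (hm : (2 <= m)%N)
  (alpha : 'M[R[i]]_(r + s))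
  (bprev bcur : R[i] -> 'M[R[i]]_(r + s))
  (cprev ccur : nat -> 'M[R[i]]_(r + s))
  (Hprev : has_expansion bprev cprev)
  (Hcur : has_expansion bcur ccur)
  (HA0 : ulsubmx (ccur 0%N) = 0) (HB0 : ursubmx (ccur 0%N) = 0)
  (Hdet : \det (block_mx (ulsubmx (ccur 1%N)) (ursubmx (ccur 1%N))
                        (dlsubmx (ccur 0%N)) (drsubmx (ccur 0%N))) != 0)
  (HD : \det (drsubmx (ccur 0%N)) != 0) :
  let A1 := ulsubmx (ccur 1%N) in
  let B1 := ursubmx (ccur 1%N) in
  let C0 := dlsubmx (ccur 0%N) in
  let D0 := drsubmx (ccur 0%N) in
  let Bp0 := ursubmx (cprev 0%N) in
  let Dp0 := drsubmx (cprev 0%N) in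
  let D0i := invmx D0 in
  let SD := A1 - B1 *m D0i *m C0 in
  let SDi := invmx SD in
  let Z1 := m%:R *: D0i - Dp0 - D0 - drsubmx alpha
            - D0i *m C0 *m (Bp0 + ursubmx alpha) in
  \det Z1 != 0 ->
  let M := block_mx (- (m%:R *: SDi))
                    (m%:R *: (SDi *m B1 *m D0i) + Bp0)
                    (m%:R *: (D0i *m C0 *m SDi))
                    ((m.+1)%:R *: invmx Z1 - m%:R *: D0i
                     - m%:R *: (D0i *m C0 *m SDi *m B1 *m D0i) + Dp0) in
  let bnext := fun eps => dPI_step m alpha (bprev eps) (bcur eps) in
  let bnext2 := fun eps => dPI_step m.+1 alpha (bcur eps) (bnext eps) in
  exists Cst : R, exists delta : R, 0 < delta /\
    forall eps : R[i], 0 < `|eps| -> `|eps| < delta%:C ->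
      `|\det (bnext2 eps) - eps ^- r * \det M| <= Cst%:C * `|eps| ^- r * `|eps|.
Proof.
move=> A1 B1 C0 D0 Bp0 Dp0 D0i SD SDi Z1 dZ1 M bnext bnext2.
pose Q0 := cprev 0%N + ccur 0%N + alpha.
have m_neq0 : (m%:R : R[i]) != 0 by rewrite pnatr_eq0 -lt0n (leq_trans _ hm).
have uD0 : D0 \in unitmx by rewrite unitmxE unitfE.
have uG0 : block_mx A1 B1 C0 D0 \in unitmx by rewrite unitmxE unitfE.
have Z1E : Z1 = m%:R *: D0i - drsubmx Q0 - D0i *m C0 *m ursubmx Q0.
  by rewrite /Z1 /Q0 !ursubmxD !drsubmxD HB0 addr0 !opprD !addrA.
have uZ1 : Z1 \in unitmx by rewrite unitmxE unitfE.
rewrite Z1E in uZ1.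
have [uH0 W0E] := second_step_limit (m.+1)%:R (cprev 0%N) m_neq0 uD0 uG0 uZ1.
rewrite -Z1E -/D0i -/SDi -/M in W0E.
have hE := @mxcvgO_top_scale_mx R r s.
have hG := mxcvgO_top_unscale Hcur HA0 HB0.
have hP := has_expansion_cvgO0 Hprev.
have hQ := mxcvgOD (mxcvgOD hP (has_expansion_cvgO0 Hcur)) (mxcvgO_cst alpha).
have hW := mxcvgO_scaled_next2 (m.+1)%:R hE hG hP hQ uG0 uH0.
rewrite W0E in hW.
apply: cvgO_scaled_bound (cvgO_det hW) _.
have hH := mxcvgO_unitmx (mxcvgO_scaled_next m%:R hE hG hQ uG0) uH0.
have := near0_and (@near0_neq0 R) (near0_and (mxcvgO_unitmx hG uG0) hH).
by apply: near0_mono => e [e0 [uG uH]]; apply: det_second_step.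
Qed.
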